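(* Let $N\ge 2$, let $\mathbf{K}\in\mathbb{R}^{N\times N}$ be the cyclic shift matrix ($(\mathbf{K}\mathbf{x})_1=x_N$, $(\mathbf{K}\mathbf{x})_i=x_{i-1}$ for $i\ge2$), $\mathbf{K}(\omega)=(1-\omega)\mathbf{I}+\omega\mathbf{K}$, $\mathbf{D}=\mathbf{K}-\mathbf{I}$ and $\mathbf{L}=\mathbf{K}+\mathbf{K}^T-2\mathbf{I}$. Suppose $\mathbf{a},\mathbf{b}\in\mathbb{R}^N$ are non-constant vectors. If $\nu=\operatorname{argmin}_{\omega\in\mathbb{R}}\|\mathbf{b}-\mathbf{K}(\omega)^T\mathbf{a}\|_2^2$, then $$\nu=\frac12\left(1-2\,\frac{\mathbf{a}^T\mathbf{D}\mathbf{b}}{\mathbf{a}^T\mathbf{L}\mathbf{a}}\right).$$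
   Context: A vector is constant if all its entries are equal. $\|\cdot\|_2$ is the Euclidean norm. *)

From HB Require Import structures.
From mathcomp Require Import all_boot all_order all_algebra.
Set Implicit Arguments. Unset Strict Implicit. Unset Printing Implicit Defensive.
Import Order.TTheory GRing.Theory Num.Theory.
Local Open Scope ring_scope.

(* Cyclic shift matrix K: (K x)_0 = x_(N-1), (K x)_i = x_(i-1) for i >= 1
   (0-based indices), i.e. K i j = 1 iff i = (j+1) mod N. *)
Definition shiftK (R : ringType) (N : nat) : 'M[R]_N :=
  \matrix_(i < N, j < N) ((nat_of_ord i == (j.+1 %% N)%N)%:R).

Definition Kom (R : comRingType) (N : nat) (w : R) : 'M[R]_N :=
  (1 - w)%:M + w *: shiftK R N.

Definition Dmx (R : ringType) (N : nat) : 'M[R]_N := shiftK R N - 1%:M.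

Definition Lmx (R : ringType) (N : nat) : 'M[R]_N :=
  shiftK R N + (shiftK R N)^T - 2%:M.

Definition sqnorm (R : ringType) (N : nat) (v : 'cV[R]_N) : R :=
  \sum_(i < N) v i 0 ^+ 2.

Definition is_constant (R : ringType) (N : nat) (v : 'cV[R]_N) : Prop :=
  forall i j : 'I_N, v i 0 = v j 0.

(* K^T is the permutation matrix of i |-> i + 1, hence orthogonal.  With
   d := K^T a - a we have K(w)^T a = a + w d, so the objective is the quadratic
   |b - a|^2 - 2 w <b - a, d> + w^2 |d|^2, whose only minimiser is
   <b - a, d> / |d|^2 because d <> 0 when a is not constant.  Orthogonality of
   K gives |d|^2 = - a^T L a = - 2 <d, a>, and a^T D b = <d, b>; substituting
   yields the formula. *)

From HB Require Import structures.
From mathcomp Require Import all_boot all_order all_algebra all_fingroup.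
From mathcomp Require Import ring lra.
Set Implicit Arguments. Unset Strict Implicit. Unset Printing Implicit Defensive.
Import Order.TTheory GRing.Theory Num.Theory.
Local Open Scope ring_scope.

Section ShiftMatrix.
Variables (R : nzRingType) (N : nat).

Definition shift_perm : 'S_N := perm (@ordS_inj N).

Lemma tr_shiftK : (shiftK R N)^T = perm_mx shift_perm.
Proof. by apply/matrixP => i j; rewrite !mxE permE eq_sym. Qed.

Lemma tr_shiftK_mulmxE (n : nat) (A : 'M[R]_(N, n)) i j :
  ((shiftK R N)^T *m A) i j = A (ordS i) j.
Proof. by rewrite tr_shiftK -row_permE mxE permE. Qed.

Lemma shiftK_mulmx_tr : shiftK R N *m (shiftK R N)^T = 1%:M.
Proof.
by rewrite -[X in X *m _]trmxK tr_shiftK tr_perm_mx -perm_mxM mulVg perm_mx1.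
Qed.

End ShiftMatrix.

Lemma ordS_invariant_const (T : Type) (n : nat) (f : 'I_n -> T) :
  (forall i, f (ordS i) = f i) -> forall i j, f i = f j.
Proof.
case: n f => [|n] f fS; first by case.
suff f_ord0 (k : nat) : (k <= n)%N -> f (inord k) = f ord0.
  by move=> i j; rewrite -(inord_val i) -(inord_val j) !f_ord0 ?leq_ord.
elim: k => [_|k IHk lt_k_n]; first by congr f; apply: val_inj; rewrite /= inordK.
rewrite -(IHk (ltnW lt_k_n)) -[in RHS]fS; congr f; apply: val_inj.
by rewrite /= !inordK ?modn_small ?ltnS // ltnW.
Qed.

Section DotProduct.
Variables (R : comNzRingType) (n : nat).
Implicit Types (u v w : 'cV[R]_n) (c : R).

Definition vdot u v : R := (u^T *m v) 0 0.

Lemma vdotC u v : vdot u v = vdot v u.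
Proof. by rewrite /vdot -[u in RHS]trmxK -trmx_mul [RHS]mxE. Qed.

Lemma vdotDr u v w : vdot u (v + w) = vdot u v + vdot u w.
Proof. by rewrite /vdot mulmxDr !mxE. Qed.

Lemma vdotBr u v w : vdot u (v - w) = vdot u v - vdot u w.
Proof. by rewrite /vdot mulmxBr !mxE. Qed.

Lemma vdotBl u v w : vdot (u - v) w = vdot u w - vdot v w.
Proof. by rewrite !(vdotC _ w) vdotBr. Qed.

Lemma vdotZr c u v : vdot u (c *: v) = c * vdot u v.
Proof. by rewrite /vdot -scalemxAr mxE. Qed.

Lemma vdotZl c u v : vdot (c *: u) v = c * vdot u v.
Proof. by rewrite !(vdotC _ v) vdotZr. Qed.

Lemma vdot_mulmxr (A : 'M[R]_n) u v : vdot u (A *m v) = vdot (A^T *m u) v.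
Proof. by rewrite /vdot trmx_mul trmxK mulmxA. Qed.

Lemma vdot_subZ_expand c u v :
  vdot (u - c *: v) (u - c *: v) = vdot u u - 2 * c * vdot u v + c ^+ 2 * vdot v v.
Proof. by rewrite vdotBl !vdotBr !vdotZl !vdotZr (vdotC v u); ring. Qed.

Lemma sqnorm_vdot v : sqnorm v = vdot v v.
Proof. by rewrite /sqnorm /vdot mxE; apply: eq_bigr => i _; rewrite mxE. Qed.

End DotProduct.

Section CyclicDifference.
Variables (R : comNzRingType) (N : nat).
Implicit Types (a b : 'cV[R]_N).

Local Notation K := (shiftK R N).

Definition cyc_diff a : 'cV[R]_N := K^T *m a - a.

Lemma tr_Kom_mulmx w a : (Kom N w)^T *m a = a + w *: cyc_diff a.
Proof.
rewrite /Kom /cyc_diff linearD /= linearZ /= tr_scalar_mx mulmxDl.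
by rewrite mul_scalar_mx -scalemxAl scalerBl scale1r scalerBr addrA [LHS]addrAC.
Qed.

Lemma vdot_shift a b : vdot (K^T *m a) (K^T *m b) = vdot a b.
Proof. by rewrite vdot_mulmxr trmxK mulmxA shiftK_mulmx_tr mul1mx. Qed.

Lemma vdot_cyc_diff a :
  vdot (cyc_diff a) (cyc_diff a) = 2 * (vdot a a - vdot a (K^T *m a)).
Proof.
by rewrite /cyc_diff !vdotBl !vdotBr vdot_shift (vdotC (K^T *m a) a); ring.
Qed.

Lemma vdot_cyc_diff_self a :
  2 * vdot (cyc_diff a) a = - vdot (cyc_diff a) (cyc_diff a).
Proof. by rewrite vdot_cyc_diff {1}/cyc_diff vdotBl vdotC; ring. Qed.

Lemma Dmx_vdotE a b : (a^T *m Dmx R N *m b) 0 0 = vdot (cyc_diff a) b.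
Proof.
by rewrite /vdot /cyc_diff /Dmx [in RHS]linearB /= trmx_mul trmxK mulmxBr mulmx1.
Qed.

Lemma Lmx_vdotE a : (a^T *m Lmx R N *m a) 0 0 = - vdot (cyc_diff a) (cyc_diff a).
Proof.
rewrite vdot_cyc_diff -mulmxA /Lmx !mulmxDl mulNmx mul_scalar_mx.
rewrite -[_ 0 0]/(vdot a _) !(vdotBr, vdotZr, vdotDr) vdot_mulmxr.
by rewrite (vdotC _ a); ring.
Qed.

Lemma sqnorm_Kom_residual w a b :
  sqnorm (b - (Kom N w)^T *m a) =
  vdot (b - a) (b - a) - 2 * w * vdot (b - a) (cyc_diff a)
  + w ^+ 2 * vdot (cyc_diff a) (cyc_diff a).
Proof. by rewrite tr_Kom_mulmx sqnorm_vdot opprD addrA vdot_subZ_expand. Qed.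

Lemma cyc_diff_eq0 a : cyc_diff a = 0 -> is_constant a.
Proof.
move=> /eqP; rewrite subr_eq0 => /eqP Ka_a.
apply: (@ordS_invariant_const _ _ (fun i => a i 0)) => i.
by rewrite -[in RHS]Ka_a tr_shiftK_mulmxE.
Qed.

End CyclicDifference.

Lemma sqnorm_ge0 (R : realDomainType) (n : nat) (v : 'cV[R]_n) : 0 <= sqnorm v.
Proof. by apply: sumr_ge0 => i _; apply: sqr_ge0. Qed.

Lemma sqnorm_eq0 (R : realDomainType) (n : nat) (v : 'cV[R]_n) :
  sqnorm v = 0 -> v = 0.
Proof.
move=> /psumr_eq0P v0; apply/matrixP => i j; rewrite ord1 mxE.
by apply/eqP; rewrite -sqrf_eq0 v0 // => k _; apply: sqr_ge0.
Qed.

Lemma quadratic_argmin (R : realFieldType) (c p q nu : R) : 0 < q ->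
  (forall w, c - 2 * nu * p + nu ^+ 2 * q <= c - 2 * w * p + w ^+ 2 * q) ->
  nu = p / q.
Proof.
move=> q_gt0 nu_min; have q_neq0 : q != 0 by rewrite gt_eqF.
have gap : c - 2 * (p / q) * p + (p / q) ^+ 2 * q
           = c - 2 * nu * p + nu ^+ 2 * q - q * (nu - p / q) ^+ 2 by field.
have : q * (nu - p / q) ^+ 2 <= 0 by have := nu_min (p / q); rewrite gap; lra.
rewrite pmulr_rle0 // => sq_le0; apply/eqP; rewrite -subr_eq0 -sqrf_eq0.
by rewrite eq_le sq_le0 sqr_ge0.
Qed.

Theorem lemma3p4 (R : realFieldType) (N : nat) (hN : (2 <= N)%N)
  (a b : 'cV[R]_N)
  (ha : ~ is_constant a) (hb : ~ is_constant b) (nu : R)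
  (hnu : forall w : R,
      sqnorm (b - (Kom N nu)^T *m a) <= sqnorm (b - (Kom N w)^T *m a)) :
  nu = 2^-1 * (1 - 2 * ((a^T *m Dmx R N *m b) 0 0 / (a^T *m Lmx R N *m a) 0 0)).
Proof.
have d_gt0 : 0 < vdot (cyc_diff a) (cyc_diff a).
  rewrite -sqnorm_vdot lt_def sqnorm_ge0 andbT.
  by apply/eqP => /sqnorm_eq0 /cyc_diff_eq0.
have -> : nu = vdot (b - a) (cyc_diff a) / vdot (cyc_diff a) (cyc_diff a).
  apply: (quadratic_argmin (c := vdot (b - a) (b - a)) d_gt0) => w.
  by rewrite -!sqnorm_Kom_residual.
rewrite Dmx_vdotE Lmx_vdotE vdotBl !(vdotC _ (cyc_diff a)).
have two_neq0 : (2 : R) != 0 by rewrite pnatr_eq0.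
rewrite -(mulKf two_neq0 (vdot _ a)) vdot_cyc_diff_self.
by field; rewrite gt_eqF.
Qed.
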